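(* Let $\beta>0$ and $N\in\mathbb{N}$. Define $W:[0,\infty)\to\mathbb{R}$ by $W(y)=\log(4y^2+1)-y\arctan(2y)$ and, for real $t$, $$P_{N,\beta}(t)=\prod_{j=1}^{N-1}\prod_{k=1}^{\lfloor j\beta/2\rfloor}\frac{\big(1+it+\frac{j\beta}{2}-k\big)\big(1+\frac{j\beta}{2}-k\big)}{\big(1+\frac{it}{2}+\frac{j\beta}{2}-k\big)^2},$$ where an empty product equals $1$. Let $c_3=\frac{\beta/8-1}{2N}+\frac38\beta+\frac32$. Then for $|t|\geq(N-1)\beta/2$, $$|P_{N,\beta}(t)|^2\leq\exp\Big(-\frac{1}{2\beta}t^2\,W\Big(\frac{N\beta}{2|t|}\Big)\Big)\exp(2c_3N).$$
   Context: $\lfloor x\rfloor$ denotes the integer part of $x$. *)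

From Stdlib Require Import Reals ZArith.
From Coquelicot Require Import Coquelicot.
Open Scope R_scope.

(* floor of a real, as an integer: Int_part x = up x - 1 = floor x *)
Definition floorR (x : R) : Z := Int_part x.

Definition W (y : R) : R := ln (4 * y ^ 2 + 1) - y * atan (2 * y).

Fixpoint prodC (n : nat) (f : nat -> C) : C :=
  match n with
  | O => 1%C
  | S m => Cmult (prodC m f) (f (S m))
  end.

Definition Pfactor (beta t : R) (j k : nat) : C :=
  let a : R := 1 + INR j * beta / 2 - INR k in
  let h : R := t / 2 in
  Cdiv (Cmult (Cplus (RtoC a) (0, t)) (RtoC a))
       (Cmult (Cplus (RtoC a) (0, h)) (Cplus (RtoC a) (0, h))).

Definition P (N : nat) (beta t : R) : C :=
  prodC (N - 1)%nat (fun j =>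
    prodC (Z.to_nat (floorR (INR j * beta / 2))) (fun k => Pfactor beta t j k)).

Definition c3 (N : nat) (beta : R) : R :=
  (beta / 8 - 1) / (2 * INR N) + 3 / 8 * beta + 3 / 2.

From Stdlib Require Import Reals ZArith Lra Lia Psatz.
From Coquelicot Require Import Coquelicot.
Open Scope R_scope.

(* Each factor of P has squared modulus 1 + psi(|t|, a) with a = 1 + jβ/2 - k,
   and log(1 + psi) <= psi.  With T = |t|, psi(T, ·) has the primitive Psi1
   and Psi1 has the primitive Psi2(x) = -(T^2/4) W(x/T).  Since psi and Psi1
   are Lipschitz, the sum over k is an endpoint Riemann sum, bounded by
   Psi1(jβ/2) up to O(1 + j/T), and the sum over j is a midpoint Riemann sum,
   bounded by (2/β) Psi2(Nβ/2) up to O(N); the hypothesis |t| >= (N-1)β/2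
   makes the accumulated error terms linear in N. *)

Lemma exp_monotone x y : x <= y -> exp x <= exp y.
Proof. intros [Hlt | ->]; [now left; apply exp_increasing | lra]. Qed.

Lemma MVT_derive (f df : R -> R) (a b : R) :
  (forall x, is_derive f x (df x)) ->
  exists c, Rmin a b <= c <= Rmax a b /\ f b - f a = df c * (b - a).
Proof.
  intros Hf. apply MVT_gen; [intros; apply Hf |].
  intros x _. apply derivable_continuous_pt.
  exists (df x). apply is_derive_Reals, Hf.
Qed.

Lemma lipschitz_of_derive_bounded (f df : R -> R) (L a b : R) :
  (forall x, is_derive f x (df x)) -> (forall x, Rabs (df x) <= L) ->
  Rabs (f b - f a) <= L * Rabs (b - a).
Proof.
  intros Hf HL. destruct (MVT_derive f df a b Hf) as [c [_ ->]].
  rewrite Rabs_mult. apply Rmult_le_compat_r; [apply Rabs_pos | apply HL].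
Qed.

Lemma increment_ge_of_derive (f g : R -> R) (a b x e : R) :
  (forall y, is_derive f y (g y)) -> a <= b ->
  (forall c, a <= c <= b -> g x - g c <= e) ->
  (b - a) * g x <= f b - f a + (b - a) * e.
Proof.
  intros Hf Hab He. destruct (MVT_derive f g a b Hf) as [c [Hc ->]].
  rewrite Rmin_left, Rmax_right in Hc by lra.
  specialize (He c Hc). nra.
Qed.

Lemma Cmod_prodC_sq_le_telescope n (f : nat -> C) (G : nat -> R) :
  (forall k, (k < n)%nat -> Cmod (f (S k)) ^ 2 <= exp (G (S k) - G k)) ->
  Cmod (prodC n f) ^ 2 <= exp (G n - G O).
Proof.
  induction n as [| n IH]; intros Hf; simpl prodC.
  - rewrite Cmod_1, Rminus_diag, exp_0. lra.
  - rewrite Cmod_mult, Rpow_mult_distr.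
    replace (G (S n) - G O) with ((G n - G O) + (G (S n) - G n)) by ring.
    rewrite exp_plus. apply Rmult_le_compat; try apply pow2_ge_0.
    + apply IH. intros k Hk. apply Hf. lia.
    + apply Hf. lia.
Qed.

Lemma floorR_to_nat_spec s : 0 <= s ->
  INR (Z.to_nat (floorR s)) <= s < INR (Z.to_nat (floorR s)) + 1.
Proof.
  intros Hs. unfold floorR. destruct (base_Int_part s) as [Hlo Hhi].
  assert (Hpos : (0 <= Int_part s)%Z).
  { apply Z.lt_pred_le, lt_IZR. simpl. lra. }
  rewrite INR_IZR_INZ, Z2Nat.id by exact Hpos. lra.
Qed.

Lemma W_0 : W 0 = 0.
Proof.
  unfold W. rewrite Rmult_0_r, atan_0.
  replace (4 * 0 ^ 2 + 1) with 1 by ring. rewrite ln_1. ring.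
Qed.

(* [Pfactor beta t j k] is convertible to [ratio (1 + INR j * beta / 2 - INR k) t]. *)
Definition ratio (a t : R) : C :=
  Cdiv (Cmult (Cplus (RtoC a) (0, t)) (RtoC a))
       (Cmult (Cplus (RtoC a) (0, t / 2)) (Cplus (RtoC a) (0, t / 2))).

Definition psi (T x : R) : R := T ^ 2 * (8 * x ^ 2 - T ^ 2) / (T ^ 2 + 4 * x ^ 2) ^ 2.
Definition dpsi (T x : R) : R := 32 * x * T ^ 2 * (T ^ 2 - 2 * x ^ 2) / (T ^ 2 + 4 * x ^ 2) ^ 3.
Definition Psi1 (T x : R) : R := T / 4 * atan (2 * x / T) - 3 / 2 * x * T ^ 2 / (4 * x ^ 2 + T ^ 2).
Definition Psi2 (T x : R) : R := - (T ^ 2 / 4) * W (x / T).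

Lemma Cmod_ratio_sq a t : a <> 0 -> Cmod (ratio a t) ^ 2 = 1 + psi (Rabs t) a.
Proof.
  intros Ha. unfold ratio, psi. rewrite pow2_abs.
  assert (Ha2 : 0 < a ^ 2) by (apply pow2_gt_0; exact Ha).
  assert (Hden : Cplus (RtoC a) (0, t / 2) <> 0%C).
  { intros E. apply (f_equal Re) in E. simpl in E. lra. }
  rewrite Cmod_div by (apply Cmult_neq_0; exact Hden).
  rewrite !Cmod_mult. unfold Rdiv.
  rewrite Rpow_mult_distr, pow_inv, !Rpow_mult_distr, !Cmod2_alt.
  simpl Re; simpl Im.
  field. nra.
Qed.

Section Primitives.

Variable T : R.
Hypothesis HT : 0 < T.

Lemma is_derive_psi x : is_derive (psi T) x (dpsi T x).
Proof.
  unfold psi, dpsi. assert (0 < T ^ 2 + 4 * x ^ 2) by nra.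
  auto_derive; [nra |]. field. nra.
Qed.

Lemma is_derive_Psi1 x : is_derive (Psi1 T) x (psi T x).
Proof.
  unfold psi, Psi1. assert (0 < T ^ 2 + 4 * x ^ 2) by nra.
  auto_derive; [nra |]. field. lra.
Qed.

Lemma is_derive_Psi2 x : is_derive (Psi2 T) x (Psi1 T x).
Proof.
  unfold Psi2, Psi1, W. assert (0 < T ^ 2 + 4 * x ^ 2) by nra.
  assert (0 <= (x * / T) ^ 2) by apply pow2_ge_0.
  auto_derive; [nra |].
  replace (2 * x / T) with (2 * (x * / T)) by (unfold Rdiv; ring).
  field. repeat split; nra.
Qed.

Lemma Rabs_psi_le x : Rabs (psi T x) <= 1.
Proof.
  unfold psi. assert (0 < (T ^ 2 + 4 * x ^ 2) ^ 2) by (apply pow_lt; nra).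
  assert (0 <= (x * T) ^ 2) by apply pow2_ge_0.
  assert (0 <= x ^ 4) by (replace (x ^ 4) with ((x ^ 2) ^ 2) by ring; apply pow2_ge_0).
  apply Rabs_le. split.
  - apply Rmult_le_reg_r with ((T ^ 2 + 4 * x ^ 2) ^ 2); [lra |].
    unfold Rdiv. rewrite Rmult_assoc, Rinv_l by lra. nra.
  - apply Rmult_le_reg_r with ((T ^ 2 + 4 * x ^ 2) ^ 2); [lra |].
    unfold Rdiv. rewrite Rmult_assoc, Rinv_l by lra. nra.
Qed.

Lemma Rabs_dpsi_le x : Rabs (dpsi T x) <= 4 / T.
Proof.
  set (y := x / T).
  assert (Hden : 0 < (1 + 4 * y ^ 2) ^ 3) by (apply pow_lt; nra).
  assert (Hpoly : forall z, 8 * z * (1 - 2 * z ^ 2) <= (1 + 4 * z ^ 2) ^ 3).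
  { intros z.
    assert (0 <= (z - 1 / 4) ^ 2) by apply pow2_ge_0.
    assert (0 <= (z ^ 2) ^ 2) by apply pow2_ge_0.
    assert (0 <= (2 * z ^ 2 - z) ^ 2) by apply pow2_ge_0.
    assert (0 <= (2 * z ^ 2 + z) ^ 2) by apply pow2_ge_0.
    nra. }
  replace (dpsi T x) with (4 / T * (8 * y * (1 - 2 * y ^ 2) / (1 + 4 * y ^ 2) ^ 3)).
  2: { unfold dpsi, y. field. split; [nra | lra]. }
  assert (H4T : 0 < 4 / T) by (apply Rdiv_lt_0_compat; lra).
  rewrite Rabs_mult, (Rabs_right (4 / T)) by lra.
  rewrite <- (Rmult_1_r (4 / T)) at 2.
  apply Rmult_le_compat_l; [lra |].
  apply Rabs_le. split; apply Rmult_le_reg_r with ((1 + 4 * y ^ 2) ^ 3); try lra;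
    unfold Rdiv; rewrite Rmult_assoc, Rinv_l by lra.
  - specialize (Hpoly (- y)). replace ((- y) ^ 2) with (y ^ 2) in Hpoly by ring. nra.
  - specialize (Hpoly y). nra.
Qed.

Lemma Psi1_0 : Psi1 T 0 = 0.
Proof.
  unfold Psi1. rewrite Rmult_0_r, Rdiv_0_l, atan_0. unfold Rdiv. ring.
Qed.

Lemma Psi2_0 : Psi2 T 0 = 0.
Proof. unfold Psi2. rewrite Rdiv_0_l, W_0. ring. Qed.

Lemma Psi1_lipschitz a b : Rabs (Psi1 T b - Psi1 T a) <= Rabs (b - a).
Proof.
  rewrite <- (Rmult_1_l (Rabs (b - a))).
  exact (lipschitz_of_derive_bounded _ _ _ a b is_derive_Psi1 Rabs_psi_le).
Qed.

Lemma Psi1_ge x : - Rabs x <= Psi1 T x.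
Proof.
  pose proof (Psi1_lipschitz 0 x) as H. rewrite Psi1_0, !Rminus_0_r in H.
  pose proof (Rle_abs (- Psi1 T x)). rewrite Rabs_Ropp in *. lra.
Qed.

Lemma psi_le_Psi1_increment x : psi T x <= Psi1 T x - Psi1 T (x - 1) + 4 / T.
Proof.
  pose proof (increment_ge_of_derive (Psi1 T) (psi T) (x - 1) x x (4 / T)
    is_derive_Psi1) as H.
  replace (x - (x - 1)) with 1 in H by ring.
  rewrite !Rmult_1_l in H. apply H; [lra |].
  intros c Hc. apply Rle_trans with (4 / T * Rabs (x - c)).
  - apply Rle_trans with (Rabs (psi T x - psi T c)); [apply Rle_abs |].
    exact (lipschitz_of_derive_bounded _ _ _ c x is_derive_psi Rabs_dpsi_le).
  - rewrite <- (Rmult_1_r (4 / T)) at 2.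
    apply Rmult_le_compat_l; [apply Rlt_le, Rdiv_lt_0_compat; lra |].
    apply Rabs_le. lra.
Qed.

Lemma Psi1_le_Psi2_midpoint h x : 0 <= h ->
  h * Psi1 T x <= Psi2 T (x + h / 2) - Psi2 T (x - h / 2) + h ^ 2 / 2.
Proof.
  intros Hh.
  pose proof (increment_ge_of_derive (Psi2 T) (Psi1 T) (x - h / 2) (x + h / 2) x (h / 2)
    is_derive_Psi2) as H.
  replace (x + h / 2 - (x - h / 2)) with h in H by field.
  replace (h ^ 2 / 2) with (h * (h / 2)) by field.
  apply H; [lra |].
  intros c Hc. apply Rle_trans with (Rabs (Psi1 T x - Psi1 T c)); [apply Rle_abs |].
  apply Rle_trans with (Rabs (x - c)); [apply Psi1_lipschitz | apply Rabs_le; lra].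
Qed.

Lemma Psi2_le_increment a b : 0 <= a <= b -> Psi2 T a <= Psi2 T b + b * (b - a).
Proof.
  intros Hab. destruct (MVT_derive (Psi2 T) (Psi1 T) a b is_derive_Psi2) as [c [Hc E]].
  rewrite Rmin_left, Rmax_right in Hc by lra.
  pose proof (Psi1_ge c). rewrite Rabs_right in * by lra. nra.
Qed.

End Primitives.

Lemma Cmod_prod_ratio_sq_le s t : t <> 0 -> 0 <= s ->
  Cmod (prodC (Z.to_nat (floorR s)) (fun k => ratio (1 + s - INR k) t)) ^ 2
  <= exp (Psi1 (Rabs t) s + 1 + 4 * s / Rabs t).
Proof.
  intros Ht Hs. set (T := Rabs t). assert (HT : 0 < T) by (apply Rabs_pos_lt, Ht).
  destruct (floorR_to_nat_spec s Hs) as [Hm_le Hm_gt].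
  set (m := Z.to_nat (floorR s)) in *.
  eapply Rle_trans.
  { apply (Cmod_prodC_sq_le_telescope m _ (fun k => 4 * INR k / T - Psi1 T (s - INR k))).
    intros k Hk. rewrite S_INR.
    assert (Hkm : INR k + 1 <= INR m) by (rewrite <- S_INR; apply le_INR; lia).
    replace (1 + s - (INR k + 1)) with (s - INR k) by ring.
    rewrite Cmod_ratio_sq by lra.
    eapply Rle_trans; [apply exp_ineq1_le | apply exp_monotone].
    pose proof (psi_le_Psi1_increment T HT (s - INR k)).
    replace (s - INR k - 1) with (s - (INR k + 1)) in * by ring.
    replace (4 * (INR k + 1) / T) with (4 * INR k / T + 4 / T) by (field; lra).
    fold T. lra. }
  apply exp_monotone.
  pose proof (Psi1_ge T HT (s - INR m)). rewrite Rabs_right in * by lra.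
  assert (4 * INR m / T <= 4 * s / T) by (apply Rmult_le_compat_r; [apply Rlt_le, Rinv_0_lt_compat |]; lra).
  simpl INR. rewrite Rminus_0_r. unfold Rdiv in *. lra.
Qed.

(* The increments of [midpoint_majorant T h] dominate the outer terms by the
   midpoint rule, with the error terms of [Cmod_prod_ratio_sq_le] summed in
   closed form. *)
Definition midpoint_majorant (T h : R) (j : nat) : R :=
  Psi2 T (INR j * h + h / 2) / h + INR j * (h / 2 + 1) + 2 * h * INR j * (INR j + 1) / T.

Lemma midpoint_majorant_0 T h : midpoint_majorant T h 0 = Psi2 T (h / 2) / h.
Proof.
  unfold midpoint_majorant. simpl INR.
  replace (0 * h + h / 2) with (h / 2) by ring. unfold Rdiv. ring.
Qed.

Lemma Psi1_le_midpoint_majorant_increment T h k : 0 < T -> 0 < h ->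
  Psi1 T (INR (S k) * h) + 1 + 4 * (INR (S k) * h) / T
  <= midpoint_majorant T h (S k) - midpoint_majorant T h k.
Proof.
  intros HT Hh.
  pose proof (Psi1_le_Psi2_midpoint T HT h ((INR k + 1) * h) (Rlt_le _ _ Hh)) as Hmid.
  replace ((INR k + 1) * h - h / 2) with (INR k * h + h / 2) in Hmid by field.
  assert (Hinc : h * (midpoint_majorant T h (S k) - midpoint_majorant T h k)
    = Psi2 T ((INR k + 1) * h + h / 2) - Psi2 T (INR k * h + h / 2) + h ^ 2 / 2
      + h * (1 + 4 * ((INR k + 1) * h) / T)).
  { unfold midpoint_majorant. rewrite S_INR. field. lra. }
  apply Rmult_le_reg_l with h; [exact Hh |].
  rewrite Hinc, S_INR. lra.
Qed.

Lemma Cmod_P_sq_le_majorant beta t n : 0 < beta -> t <> 0 ->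
  Cmod (P (S n) beta t) ^ 2
  <= exp (midpoint_majorant (Rabs t) (beta / 2) n - midpoint_majorant (Rabs t) (beta / 2) 0).
Proof.
  intros Hb Ht. unfold P. replace (S n - 1)%nat with n by lia.
  apply Cmod_prodC_sq_le_telescope. intros k _.
  eapply Rle_trans; [apply (Cmod_prod_ratio_sq_le (INR (S k) * beta / 2) t Ht) |].
  - pose proof (pos_INR (S k)). apply Rmult_le_pos; [apply Rmult_le_pos |]; lra.
  - apply exp_monotone.
    replace (INR (S k) * beta / 2) with (INR (S k) * (beta / 2)) by (unfold Rdiv; ring).
    apply Psi1_le_midpoint_majorant_increment; [apply Rabs_pos_lt, Ht | lra].
Qed.

Lemma midpoint_majorant_le beta T n : 0 < beta -> 0 < T -> INR n * beta / 2 <= T ->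
  midpoint_majorant T (beta / 2) n - midpoint_majorant T (beta / 2) 0
  <= - (1 / (2 * beta)) * T ^ 2 * W (INR (S n) * beta / (2 * T))
     + 2 * c3 (S n) beta * INR (S n).
Proof.
  intros Hb HT HnT. set (h := beta / 2). assert (Hh : 0 < h) by (unfold h; lra).
  pose proof (pos_INR n) as Hn.
  set (w := W (INR (S n) * beta / (2 * T))).
  assert (Hend : Psi2 T (INR n * h + h / 2) <= - (T ^ 2 / 4) * w + (INR n + 1) * h * (h / 2)).
  { replace (- (T ^ 2 / 4) * w) with (Psi2 T ((INR n + 1) * h))
      by (unfold Psi2, w, h; rewrite S_INR; do 2 f_equal; field; lra).
    pose proof (Psi2_le_increment T HT (INR n * h + h / 2) ((INR n + 1) * h)) as H.
    replace ((INR n + 1) * h - (INR n * h + h / 2)) with (h / 2) in H by field.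
    apply H. split; nra. }
  assert (Hstart : - Psi2 T (h / 2) <= h ^ 2 / 4).
  { pose proof (Psi2_le_increment T HT 0 (h / 2) ltac:(lra)). rewrite Psi2_0 in *. lra. }
  assert (Hquad : 2 * h * INR n * (INR n + 1) / T <= 2 * (INR n + 1)).
  { apply Rle_div_l; [exact HT |]. unfold h. nra. }
  assert (Hmid : (Psi2 T (INR n * h + h / 2) - Psi2 T (h / 2)) / h
                 <= - (T ^ 2 / (2 * beta)) * w + (INR n + 1) * h / 2 + h / 4).
  { apply Rle_div_l; [exact Hh |].
    replace ((- (T ^ 2 / (2 * beta)) * w + (INR n + 1) * h / 2 + h / 4) * h)
      with (- (T ^ 2 / 4) * w + (INR n + 1) * h * (h / 2) + h ^ 2 / 4) by (unfold h; field; lra).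
    lra. }
  rewrite midpoint_majorant_0. unfold midpoint_majorant, c3. rewrite S_INR.
  replace (- (1 / (2 * beta)) * T ^ 2 * w) with (- (T ^ 2 / (2 * beta)) * w) by (field; lra).
  replace (2 * ((beta / 8 - 1) / (2 * (INR n + 1)) + 3 / 8 * beta + 3 / 2) * (INR n + 1))
    with (beta / 8 - 1 + 3 / 4 * beta * (INR n + 1) + 3 * (INR n + 1)) by (field; lra).
  assert (Psi2 T (INR n * h + h / 2) / h - Psi2 T (h / 2) / h
          = (Psi2 T (INR n * h + h / 2) - Psi2 T (h / 2)) / h) by (field; lra).
  unfold h in *. nra.
Qed.

Lemma P_N_le_1 N beta t : (N <= 1)%nat -> P N beta t = 1%C.
Proof. intros HN. unfold P. replace (N - 1)%nat with 0%nat by lia. reflexivity. Qed.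

Theorem lemma3p5 (beta : R) (N : nat) (t : R) :
  0 < beta ->
  INR (N - 1) * beta / 2 <= Rabs t ->
  (Cmod (P N beta t)) ^ 2 <=
    exp (- (1 / (2 * beta)) * t ^ 2 * W (INR N * beta / (2 * Rabs t)))
    * exp (2 * c3 N beta * INR N).
Proof.
  intros Hb Ht. destruct (Req_dec t 0) as [-> | Ht0].
  - assert (HN : (N <= 1)%nat).
    { rewrite Rabs_R0 in Ht. destruct (le_gt_dec N 1) as [| HN]; [assumption |].
      pose proof (lt_0_INR (N - 1) ltac:(lia)). nra. }
    rewrite P_N_le_1, Cmod_1, pow1 by exact HN.
    rewrite (pow_i 2) by lia. rewrite Rmult_0_r, Rmult_0_l, exp_0, Rmult_1_l, <- exp_0.
    apply exp_monotone. unfold c3.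
    destruct N as [| [|]]; simpl INR; lra || lia.
  - destruct N as [| n].
    + rewrite P_N_le_1, Cmod_1, pow1 by lia. simpl INR.
      rewrite !Rmult_0_l, Rdiv_0_l, W_0, Rmult_0_r, Rmult_0_r, exp_0. lra.
    + replace (S n - 1)%nat with n in Ht by lia.
      eapply Rle_trans; [apply Cmod_P_sq_le_majorant; assumption |].
      rewrite <- exp_plus, <- (pow2_abs t). apply exp_monotone.
      apply midpoint_majorant_le; [lra | apply Rabs_pos_lt, Ht0 | lra].
Qed.
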